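(* Consider a finite set $\mathcal{U}$ of users with traffic demands $T_u>0$ and attenuations $\ell_u>0$, constants $g,N_0,\Gamma>0$, $c\in(0,1)$, and $T_{tot}=\sum_{u}T_u$. For $W>0$ let $\mathit{EE}_{opt}(W)$ be the maximum of $\mathit{EE}=\frac{cT_{tot}}{\sum_u p_u}$ over allocations $w_u>0$ with $\sum_u w_u=W$ and $p_u=\frac{gN_0\Gamma}{\ell_u}(2^{T_u/w_u}-1)w_u$. Then the optimal energy efficiency admits the explicit upper bound, attained as $W\to\infty$ (low SNR regime), $$\mathit{EE}^*=\frac{cT_{tot}}{gN_0\Gamma\ln 2\sum_{u\in\mathcal{U}}\frac{T_u}{\ell_u}},$$ i.e. $\mathit{EE}_{opt}(W)\le\mathit{EE}^*$ for all $W$ and $\mathit{EE}_{opt}(W)\to\mathit{EE}^*$ as $W\to\infty$.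
   Context: Model: downlink OFDMA single cell with Rayleigh fading; $p_u$ is the minimum transmit power ensuring $\mathbb{P}(C_u\ge T_u)=c$, with $C_u=w_u\log_2(1+\mathit{SNR}_u/\Gamma)$, $\mathit{SNR}_u=p_uh_f\ell_u/(w_uN_0)$, $h_f$ exponential with mean $1/\tau$, $g=\tau/\ln(1/c)$. *)

From HB Require Import structures.
From mathcomp Require Import all_boot all_order all_algebra.
From mathcomp Require Import all_classical all_reals all_analysis.
Set Implicit Arguments. Unset Strict Implicit. Unset Printing Implicit Defensive.
Import Order.TTheory GRing.Theory Num.Theory.
Local Open Scope classical_set_scope.
Local Open Scope ring_scope.

Definition user_power (R : realType) (g N0 Gam l T w : R) : R :=
  g * N0 * Gam / l * (2 `^ (T / w) - 1) * w.

Definition Ttot (R : realType) (U : finType) (T : U -> R) : R := \sum_(u : U) T u.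

Definition EE (R : realType) (U : finType) (g N0 Gam c : R) (l T w : U -> R) : R :=
  c * Ttot T / \sum_(u : U) user_power g N0 Gam (l u) (T u) (w u).

Definition EE_values (R : realType) (U : finType) (g N0 Gam c : R)
  (l T : U -> R) (W : R) : set R :=
  [set e | exists w : U -> R,
     (forall u, 0 < w u) /\ \sum_(u : U) w u = W /\ e = EE g N0 Gam c l T w].

Definition EE_opt (R : realType) (U : finType) (g N0 Gam c : R)
  (l T : U -> R) (W : R) : R := sup (EE_values g N0 Gam c l T W).

Definition EE_star (R : realType) (U : finType) (g N0 Gam c : R) (l T : U -> R) : R :=
  c * Ttot T / (g * N0 * Gam * ln 2 * \sum_(u : U) T u / l u).

From Pilot Require Import Defs.
From HB Require Import structures.
From mathcomp Require Import all_boot all_order all_algebra.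
From mathcomp Require Import all_classical all_reals all_analysis.
From mathcomp Require Import ring lra.
Set Implicit Arguments. Unset Strict Implicit. Unset Printing Implicit Defensive.
Import Order.TTheory GRing.Theory Num.Theory.
Local Open Scope classical_set_scope.
Local Open Scope ring_scope.

(* Since x ln 2 <= 2^x - 1, every user spends at least g N0 Gam ln 2 T_u / l_u,
   whatever its bandwidth, so EE <= EE^*.  Conversely 2^x - 1 <= x ln 2 e^(x ln 2),
   so the equal split w_u = W / |U| spends at most e^(k/W) times that minimum,
   k = T_tot |U| ln 2; hence EE^* (1 - k/W) <= EE_opt(W) <= EE^*. *)

Lemma ler_sum_term (R : numDomainType) (I : finType) (F : I -> R) (i : I) :
  (forall j, 0 <= F j) -> F i <= \sum_j F j.
Proof.
move=> F_ge0; rewrite (bigD1 i) //= lerDl.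
by apply: sumr_ge0 => j _; exact: F_ge0.
Qed.

Lemma ln2_gt0 {R : realType} : 0 < ln (2 : R).
Proof. by apply: ln_gt0; rewrite ltr1n. Qed.

Section PowR2.
Variable R : realType.

Lemma powR2E (x : R) : 2 `^ x = expR (x * ln 2).
Proof. by rewrite /powR pnatr_eq0. Qed.


Lemma expR_sub1_le (y : R) : expR y - 1 <= y * expR y.
Proof.
have ey_gt0 := expR_gt0 y.
have : (1 - y) * expR y <= 1.
  rewrite -[leRHS](mulVf (lt0r_neq0 ey_gt0)) ler_pM2r // -expRN.
  by have := expR_ge1Dx (- y); lra.
lra.
Qed.

Lemma powR2_sub1_ge (x : R) : x * ln 2 <= 2 `^ x - 1.
Proof. by rewrite powR2E lerBrDl expR_ge1Dx. Qed.

Lemma powR2_sub1_le (x : R) : 2 `^ x - 1 <= x * ln 2 * expR (x * ln 2).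
Proof. by rewrite powR2E expR_sub1_le. Qed.

End PowR2.

Section UserPower.
Variables (R : realType) (g N0 Gam l T w : R).
Hypotheses (g_gt0 : 0 < g) (N0_gt0 : 0 < N0) (Gam_gt0 : 0 < Gam)
  (l_gt0 : 0 < l) (w_gt0 : 0 < w).

Let K_ge0 : 0 <= g * N0 * Gam / l.
Proof. by apply/ltW/divr_gt0; rewrite // !mulr_gt0. Qed.

Let user_powerE (y : R) :
  g * N0 * Gam / l * (T / w * y) * w = g * N0 * Gam * y * (T / l).
Proof. by field; rewrite !lt0r_neq0. Qed.

Lemma user_power_ge : g * N0 * Gam * ln 2 * (T / l) <= user_power g N0 Gam l T w.
Proof.
rewrite /user_power -user_powerE.
apply: ler_wpM2r; first exact: ltW.
exact/(ler_wpM2l K_ge0)/powR2_sub1_ge.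
Qed.

Lemma user_power_le (Y : R) : 0 <= T -> T / w * ln 2 <= Y ->
  user_power g N0 Gam l T w <= g * N0 * Gam * (ln 2 * expR Y) * (T / l).
Proof.
move=> T_ge0 rate_le; rewrite /user_power -user_powerE.
apply: ler_wpM2r; first exact: ltW.
apply: (ler_wpM2l K_ge0); apply: le_trans (powR2_sub1_le _) _; rewrite -mulrA.
apply: ler_wpM2l; first exact: divr_ge0 T_ge0 (ltW w_gt0).
by apply: ler_wpM2l; [exact: ltW ln2_gt0 | rewrite ler_expR].
Qed.

End UserPower.

Section EnergyEfficiency.
Variables (R : realType) (U : finType) (u0 : U) (T l : U -> R) (g N0 Gam c : R).
Hypotheses (T_gt0 : forall u, 0 < T u) (l_gt0 : forall u, 0 < l u)
  (g_gt0 : 0 < g) (N0_gt0 : 0 < N0) (Gam_gt0 : 0 < Gam) (c_gt0 : 0 < c).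

Local Notation EE := (EE g N0 Gam c l T).
Local Notation EE_star := (EE_star g N0 Gam c l T).
Local Notation EE_opt := (EE_opt g N0 Gam c l T).
Local Notation EE_values := (EE_values g N0 Gam c l T).
Local Notation minimal_power := (g * N0 * Gam * ln 2 * \sum_(u : U) T u / l u).

Let n : R := #|U|%:R.

Let n_gt0 : 0 < n.
Proof. by rewrite ltr0n; apply/card_gt0P; exists u0. Qed.

Let Ttot_gt0 : 0 < Ttot T.
Proof. by apply: lt_le_trans (T_gt0 u0) _; apply: ler_sum_term => u; exact: ltW. Qed.

Let minimal_power_gt0 : 0 < minimal_power.
Proof.
rewrite !mulr_gt0 ?ln2_gt0 //; apply: lt_le_trans (ler_sum_term u0 _).
  exact: divr_gt0.
by move=> u; apply/ltW/divr_gt0.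
Qed.

Lemma EE_star_gt0 : 0 < EE_star.
Proof. exact: divr_gt0 (mulr_gt0 c_gt0 Ttot_gt0) minimal_power_gt0. Qed.

Lemma minimal_power_le_sum (w : U -> R) : (forall u, 0 < w u) ->
  minimal_power <= \sum_u user_power g N0 Gam (l u) (T u) (w u).
Proof. by move=> w_gt0; rewrite mulr_sumr; apply: ler_sum => u _; exact: user_power_ge. Qed.

Lemma EE_le_EE_star (w : U -> R) : (forall u, 0 < w u) -> EE w <= EE_star.
Proof.
move=> w_gt0; rewrite /Defs.EE /Defs.EE_star.
apply: ler_wpM2l; first exact: ltW (mulr_gt0 c_gt0 Ttot_gt0).
have sum_ge := minimal_power_le_sum w_gt0.
by rewrite lef_pV2 ?posrE // (lt_le_trans minimal_power_gt0).
Qed.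

Definition equal_share (W : R) : U -> R := fun=> W / n.

Lemma equal_share_feasible (W : R) : 0 < W -> EE_values W (EE (equal_share W)).
Proof.
move=> W_gt0; exists (equal_share W); split; first by move=> u; rewrite divr_gt0.
split=> //; rewrite sumr_const -mulr_natr cardT -cardE mulrVK //.
by rewrite unitfE lt0r_neq0.
Qed.

Lemma EE_values_ubound (W : R) : ubound (EE_values W) EE_star.
Proof. by move=> _ [w [w_gt0 [_ ->]]]; exact: EE_le_EE_star. Qed.

Lemma EE_opt_le_EE_star (W : R) : 0 < W -> EE_opt W <= EE_star.
Proof.
move=> W_gt0; apply: ge_sup; last exact: EE_values_ubound.
by exists (EE (equal_share W)); exact: equal_share_feasible.
Qed.

Let k : R := Ttot T * n * ln 2.

Lemma equal_share_power_le (W : R) : 0 < W ->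
  \sum_u user_power g N0 Gam (l u) (T u) (equal_share W u) <= minimal_power * expR (k / W).
Proof.
move=> W_gt0.
have -> : minimal_power * expR (k / W) =
    \sum_u g * N0 * Gam * (ln 2 * expR (k / W)) * (T u / l u).
  by rewrite mulrAC mulr_sumr; apply: eq_bigr => u _; ring.
apply: ler_sum => u _; apply: user_power_le => //; first exact: divr_gt0.
  exact: ltW.
have -> : T u / equal_share W u * ln 2 = T u * (n * ln 2 / W).
  by rewrite /equal_share; field; rewrite !lt0r_neq0.
have -> : k / W = Ttot T * (n * ln 2 / W) by rewrite /k; field; rewrite lt0r_neq0.
have rate_gt0 : 0 < n * ln 2 / W by rewrite divr_gt0 // mulr_gt0 // ln2_gt0.
by apply: (ler_wpM2r (ltW rate_gt0)); apply: ler_sum_term => v; exact: ltW.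
Qed.

Lemma EE_equal_share_ge (W : R) : 0 < W -> EE_star * (1 - k / W) <= EE (equal_share W).
Proof.
move=> W_gt0; have share_gt0 u : 0 < equal_share W u by rewrite divr_gt0.
apply: (@le_trans _ _ (EE_star * expR (- (k / W)))).
  by apply: ler_wpM2l; [exact: ltW EE_star_gt0 | exact: expR_ge1Dx].
rewrite /Defs.EE /Defs.EE_star expRN -mulrA -invfM.
apply: ler_wpM2l; first exact: ltW (mulr_gt0 c_gt0 Ttot_gt0).
have power_gt0 := lt_le_trans minimal_power_gt0 (minimal_power_le_sum share_gt0).
have bound_gt0 := mulr_gt0 minimal_power_gt0 (expR_gt0 (k / W)).
by rewrite lef_pV2 ?posrE // equal_share_power_le.
Qed.

Lemma EE_opt_ge (W : R) : 0 < W -> EE_star * (1 - k / W) <= EE_opt W.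
Proof.
move=> W_gt0; apply: le_trans (EE_equal_share_ge W_gt0) _.
apply: ub_le_sup; last exact: equal_share_feasible.
by exists EE_star; exact: EE_values_ubound.
Qed.

Let pinfty_gt0 : \forall W \near +oo, 0 < W :> R.
Proof. by apply: nbhs_pinfty_gt; rewrite num_real. Qed.

Lemma EE_opt_cvg : EE_opt W @[W --> +oo] --> (EE_star : R^o).
Proof.
have k_div_cvg0 : k / W @[W --> +oo] --> (0 : R^o).
  rewrite -(mulr0 k); apply: cvgM; first exact: (cvg_cst (k : R^o)).
  by apply/gtr0_cvgV0; [exact: pinfty_gt0 | exact: cvg_id].
have lower_cvg : EE_star * (1 - k / W) @[W --> +oo] --> (EE_star : R^o).
  rewrite -[X in _ --> X]mulr1 -[X in _ * X]subr0.
  apply: cvgM; first exact: (cvg_cst (EE_star : R^o)).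
  by apply: cvgB; first exact: (cvg_cst (1 : R^o)).
have bounds : \forall W \near +oo, EE_star * (1 - k / W) <= EE_opt W <= EE_star.
  near=> W; have W_gt0 : 0 < W by near: W; exact: pinfty_gt0.
  by rewrite EE_opt_ge ?EE_opt_le_EE_star.
apply: (squeeze_cvgr bounds); [exact: lower_cvg | exact: (cvg_cst (EE_star : R^o))].
Unshelve. all: by end_near.
Qed.

End EnergyEfficiency.

Theorem lemma2 (R : realType) (U : finType) (u0 : U)
  (T l : U -> R) (g N0 Gam c : R)
  (hT : forall u, 0 < T u) (hl : forall u, 0 < l u)
  (hg : 0 < g) (hN0 : 0 < N0) (hGam : 0 < Gam)
  (hc0 : 0 < c) (hc1 : c < 1) :
  (forall W : R, 0 < W -> EE_opt g N0 Gam c l T W <= EE_star g N0 Gam c l T) /\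
  (EE_opt g N0 Gam c l T W @[W --> +oo] --> (EE_star g N0 Gam c l T : R^o)).
Proof. by split; [exact: EE_opt_le_EE_star | exact: EE_opt_cvg]. Qed.
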